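(* Let $q$ be a prime power and $n,k,\delta$ positive integers with $k\le n$ and $\delta\le 2k$. Put $h=\left\lfloor k+1-\frac{\delta}{2}\right\rfloor$. Then $$B_q(n,k,\delta;3)\le\left(1+\frac{1}{2\left[{k\atop h}\right]_q-1}\right)\frac{\left[{n\atop h}\right]_q}{\left[{k\atop h}\right]_q}.$$
   Context: For a prime power $q$, $\mathcal{G}_q(n,k)$ denotes the set of all $k$-dimensional subspaces of $\mathbb{F}_q^n$, and the Gaussian binomial coefficient is $\left[{n\atop k}\right]_q=\prod_{i=0}^{k-1}\frac{q^n-q^i}{q^k-q^i}=|\mathcal{G}_q(n,k)|$. An $\alpha$-$(n,k,\delta)_q^c$ covering Grassmannian code is a subset $\mathcal{C}\subseteq\mathcal{G}_q(n,k)$ (no repeated codewords) such that every set of $\alpha$ distinct codewords of $\mathcal{C}$ spans a subspace of $\mathbb{F}_q^n$ of dimension at least $k+\delta$. $B_q(n,k,\delta;\alpha)$ denotes the maximum size of an $\alpha$-$(n,k,\delta)_q^c$ code. *)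

From HB Require Import structures.
From mathcomp Require Import all_boot all_order all_algebra all_field.
Set Implicit Arguments. Unset Strict Implicit. Unset Printing Implicit Defensive.
Import Order.TTheory GRing.Theory Num.Theory.
Local Open Scope ring_scope.

Definition gauss_binom (q n k : nat) : rat :=
  \prod_(i < k) (((q ^ n)%N%:R - (q ^ i)%N%:R) / ((q ^ k)%N%:R - (q ^ i)%N%:R)).

Definition covering_code (F : finFieldType) (n k delta alpha : nat)
    (C : seq {vspace 'rV[F]_n}) : Prop :=
  [/\ uniq C,
      (forall U, U \in C -> \dim U = k) &
      (forall S : seq {vspace 'rV[F]_n},
          uniq S -> size S = alpha -> {subset S <= C} ->
          (k + delta <= \dim (\sum_(U <- S) U)%VS)%N)].

From HB Require Import structures.
From mathcomp Require Import all_boot all_order all_algebra all_field zify ring.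
Set Implicit Arguments. Unset Strict Implicit. Unset Printing Implicit Defensive.
Import Order.TTheory GRing.Theory Num.Theory.

(* With h := k + 1 - ceil(delta/2) we have 2k - delta < 2h.  Count ordered h-tuples of
   linearly independent vectors; let #T(m) be their number in an m-dimensional space, so
   that #T(m) = [m h]_q #T(h).  For distinct codewords A, B, D the covering property
   dim (A + B + D) >= k + delta gives dim (A :&: B) + dim (D :&: (A + B)) <= 2k - delta < 2h,
   so two large intersections never occur together: a tuple lies in at most two codewords,
   and a codeword U meets at most one other codeword W in dimension >= h.
   Let U give weight 2 to each of its tuples, only 1 to those it shares with W, and 1 to the
   "exceptional" tuples x :: s with s in U and x in (U + W) outside U and W, when
   dim (U :&: W) > h; these lie in no codeword.  Every tuple receives total weight at most 2,
   while U hands out at least 2 #T(k) - #T(h): when dim (U :&: W) > h, shifting the first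
   vector by a fixed vector of (U + W) outside U and W maps the tuples of U :&: W injectively
   to exceptional tuples.  Hence |C| (2 #T(k) - #T(h)) <= 2 #T(n). *)

Lemma sum_nat_bool_count (I : Type) (r : seq I) (P : pred I) :
  \sum_(i <- r) (P i : nat) = count P r.
Proof. by elim: r => [|a r IH]; rewrite ?big_nil ?big_cons //= IH. Qed.

Lemma sum_nat_bool_card (T : finType) (A : {pred T}) : \sum_t (t \in A : nat) = #|A|.
Proof. by rewrite -sum1_card [RHS]big_mkcond; apply: eq_bigr => t _; case: (t \in A). Qed.

Lemma uniq_has_neq (T : eqType) (s : seq T) x : uniq s -> 1 < size s -> has (predC1 x) s.
Proof.
case: s => [|a [|b s]] //= /andP[]; rewrite inE negb_or => /andP[nab _] _ _.
by case: (eqVneq a x) => [<-|] //=; rewrite eq_sym nab.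
Qed.

Section SubspaceFacts.
Variables (K : fieldType) (vT : vectType K).

Lemma dimv_sum3_cap (A B D : {vspace vT}) :
  \dim (A + B + D) + \dim (A :&: B) + \dim (D :&: (A + B)) = \dim A + \dim B + \dim D.
Proof.
rewrite [(D :&: _)%VS]capvC; have := dimv_sum_cap (A + B) D; have := dimv_sum_cap A B; lia.
Qed.

Lemma sum_notin_union (U W : {vspace vT}) : ~~ (U <= W)%VS -> ~~ (W <= U)%VS ->
  exists w, [/\ w \in (U + W)%VS, w \notin U & w \notin W].
Proof.
case/subvPn=> u uU uW; case/subvPn=> u' u'W u'U; exists (u + u')%R; split.
- exact: memv_add.
- by apply: contra u'U => /memvB/(_ uU); rewrite addrC addKr.
- by apply: contra uW => /memvB/(_ u'W); rewrite addrK.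
Qed.

End SubspaceFacts.

Section FreeTuples.
Variables (F : finFieldType) (n : nat).
Local Notation V := 'rV[F]_n.
Local Notation q := #|F|.

Definition free_tuples m (U : {vspace V}) :=
  [set t : m.-tuple V | free t && (<<t>> <= U)%VS].

Lemma free_tuplesP m U (t : m.-tuple V) :
  reflect [/\ free t, (<<t>> <= U)%VS & \dim <<t>> = m] (t \in free_tuples m U).
Proof.
rewrite inE; apply: (iffP andP) => [[ft tU]|[]//].
by split=> //; rewrite (eqP ft) size_tuple.
Qed.

Lemma free_tuplesI m U W : free_tuples m (U :&: W) = free_tuples m U :&: free_tuples m W.
Proof. by apply/setP => t; rewrite !inE subv_cap andbACA andbb. Qed.

Lemma free_tuples_fullv m : free_tuples m fullv = [set t : m.-tuple V | free t].
Proof. by apply/setP => t; rewrite !inE subvf andbT. Qed.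

Lemma card_vspace_diff (U W : {vspace V}) : (W <= U)%VS ->
  #|[pred x : V | (x \in U) && (x \notin W)]| = q ^ \dim U - q ^ \dim W.
Proof.
move=> WU; rewrite -!card_vspace -(cardID (mem W) (mem U)).
have -> : #|[predI mem U & mem W]| = #|W|.
  by apply: eq_card => x; rewrite !inE andb_idl //; apply: (subvP WU).
by rewrite addKn; apply: eq_card => x; rewrite !inE andbC.
Qed.

Lemma card_free_tuples m U : #|free_tuples m U| = \prod_(i < m) (q ^ \dim U - q ^ i).
Proof.
elim: m => [|m IH].
  rewrite big_ord0 -[RHS](card_tuple 0 V); apply: eq_card => t.
  by rewrite !inE tuple0 /= nil_free span_nil sub0v.
pose cons_tuple (p : m.-tuple V * V) : m.+1.-tuple V := [tuple of p.2 :: p.1].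
have cons_inj : injective cons_tuple.
  by move=> [s x] [s' x'] /(congr1 val) /= [-> /val_inj ->].
pose extend (s : m.-tuple V) x := (x \in U) && (x \notin <<s>>%VS).
have -> : free_tuples m.+1 U =
    cons_tuple @: [set p | (p.1 \in free_tuples m U) && extend p.1 p.2].
  apply/setP => t; rewrite inE; apply/idP/imsetP.
    case/tupleP: t => x s; rewrite /= free_cons span_cons subv_add -memvE.
    case/andP=> /andP[xs fs] /andP[xU sU]; exists (s, x) => //.
    by rewrite !inE fs sU /extend xU xs.
  case=> -[s x]; rewrite !inE /extend /= => /andP[/andP[fs sU] /andP[xU xs]] ->.
  by rewrite /= free_cons span_cons subv_add -memvE xs fs xU sU.
rewrite card_imset // big_ord_recr /= -IH -[LHS]sum1_card.
rewrite (eq_bigl _ _ (fun p => in_set _ p)) -(pair_big_dep _ extend (fun _ _ => 1)) /=.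
rewrite -sum_nat_const; apply: eq_bigr => s /free_tuplesP[_ sU ds].
by rewrite sum1_card card_vspace_diff //; congr (_ - _ ^ _).
Qed.

End FreeTuples.

Section CoveringCode.
Variables (F : finFieldType) (n k delta h : nat) (C : seq {vspace 'rV[F]_n}).
Local Notation V := 'rV[F]_n.
Local Notation tuples := (@free_tuples F n h).
Hypothesis covC : covering_code k delta 3 C.
Hypothesis h_gt0 : 0 < h.
Hypothesis h_large : 2 * k < 2 * h + delta.

Let C_uniq : uniq C. Proof. by case: covC. Qed.
Let C_dim U : U \in C -> \dim U = k. Proof. by case: covC => _ /(_ U). Qed.

Lemma covering3_dim A B D : A \in C -> B \in C -> D \in C -> uniq [:: A; B; D] ->
  k + delta <= \dim (A + B + D).
Proof.
move=> AC BC DC uABD; case: covC => _ _ /(_ _ uABD erefl).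
rewrite !big_cons big_nil addv0 addvA; apply => x.
by rewrite !inE => /or3P[] /eqP ->.
Qed.

Lemma dim_cap_triple_lt A B D d1 d2 :
  A \in C -> B \in C -> D \in C -> uniq [:: A; B; D] ->
  d1 <= \dim (A :&: B) -> d2 <= \dim (D :&: (A + B)) -> d1 + d2 < 2 * h.
Proof.
move=> AC BC DC uABD; have := covering3_dim AC BC DC uABD.
have := dimv_sum3_cap A B D; rewrite (C_dim AC) (C_dim BC) (C_dim DC); lia.
Qed.

Lemma caps_not_both_large A B D : A \in C -> B \in C -> D \in C -> uniq [:: A; B; D] ->
  h <= \dim (A :&: B) -> h <= \dim (D :&: (A + B)) -> False.
Proof.
by move=> AC BC DC uABD dAB dDAB; have := dim_cap_triple_lt AC BC DC uABD dAB dDAB;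
  rewrite addnn -mul2n ltnn.
Qed.

Lemma partner_unique U W1 W2 : U \in C -> W1 \in C -> W2 \in C -> W1 != U -> W2 != U ->
  h <= \dim (U :&: W1) -> h <= \dim (U :&: W2) -> W1 = W2.
Proof.
move=> UC W1C W2C W1U W2U h1 h2; apply/eqP/negPn/negP => W12.
have uUW1W2 : uniq [:: U; W1; W2] by rewrite /= !inE negb_or eq_sym W1U eq_sym W2U W12.
have dW2UW1 : h <= \dim (W2 :&: (U + W1)).
  by apply: leq_trans h2 _; apply: dimvS; rewrite capvC capvS // addvSl.
exact: (caps_not_both_large UC W1C W2C uUW1W2 h1 dW2UW1).
Qed.

Lemma tuples_dim_cap A B t : t \in tuples A -> t \in tuples B -> h <= \dim (A :&: B).
Proof.
case/free_tuplesP => _ tA dt /free_tuplesP[_ tB _].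
by rewrite -{1}dt dimvS // subv_cap tA tB.
Qed.

Lemma count_tuples_le2 t : count (fun U => t \in tuples U) C <= 2.
Proof.
rewrite -size_filter; have := filter_uniq (fun U => t \in tuples U) C_uniq.
have memf U := mem_filter (fun U => t \in tuples U) U C.
case ef: (filter _ C) memf => [|A [|B [|D r]]] memf //= uABDr.
have /andP[tA AC] : (t \in tuples A) && (A \in C) by rewrite -memf mem_head.
have /andP[tB BC] : (t \in tuples B) && (B \in C) by rewrite -memf !inE eqxx orbT.
have /andP[tD DC] : (t \in tuples D) && (D \in C) by rewrite -memf !inE eqxx !orbT.
have uABD : uniq [:: A; B; D].
  by move: uABDr; rewrite /= !inE !negb_or -!andbA => /and5P[-> -> _ -> _].
have dDAB : h <= \dim (D :&: (A + B)).
  apply: leq_trans (tuples_dim_cap tD tA) _.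
  by apply: dimvS; rewrite capvS // addvSl.
by case: (caps_not_both_large AC BC DC uABD (tuples_dim_cap tA tB) dDAB).
Qed.

Definition exceptional_for U W (t : seq V) :=
  if t is x :: s then
    [&& free s, (<<s>> <= U)%VS, x \in (U + W)%VS, x \notin U & x \notin W]
  else false.

Definition exceptional U := [set t : h.-tuple V |
  has (fun W => [&& W != U, h < \dim (U :&: W) & exceptional_for U W t]) C].

Definition shared U (t : h.-tuple V) := has (fun W => (W != U) && (t \in tuples W)) C.

Definition weight U t : nat := (t \in tuples U) * (2 - shared U t) + (t \in exceptional U).

Lemma exceptional_for_free U W t : exceptional_for U W t -> free t.
Proof.
case: t => [|x s] //= /and5P[fs sU _ xU _]; rewrite free_cons fs andbT.
by apply: contra xU; apply: (subvP sU).
Qed.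

Lemma exceptional_free U t : t \in exceptional U -> free t.
Proof. by rewrite inE => /hasP[W _ /and3P[_ _ /exceptional_for_free]]. Qed.

Lemma exceptional_notin_tuples U W t : U \in C -> W \in C ->
  t \in exceptional U -> t \notin tuples W.
Proof.
move=> UC WC; rewrite inE => /hasP[P PC /and3P[PU dUP]].
move=> tUP; apply/negP => /free_tuplesP[_ tW dt].
case: t tUP tW dt => -[|x s] //= _ /and5P[_ sU xUP xU xP] tW dt.
have xW : x \in W by apply: (subvP tW); rewrite memv_span ?mem_head.
have tUP : (<<x :: s>> <= U + P)%VS.
  by rewrite span_cons subv_add -memvE xUP (subv_trans sU (addvSl _ _)).
have uUPW : uniq [:: U; P; W].
  rewrite /= !inE negb_or eq_sym PU /= andbT.
  by apply/andP; split; apply/eqP => e; [move: xU | move: xP]; rewrite e xW.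
have dWUP : h <= \dim (W :&: (U + P)) by rewrite -{1}dt dimvS // subv_cap tW.
exact: (caps_not_both_large UC PC WC uUPW (ltnW dUP) dWUP).
Qed.

Lemma exceptional_owner U P W (t : h.-tuple V) :
  U \in C -> P \in C -> P != U -> h < \dim (U :&: P) -> exceptional_for U P t ->
  W \in C -> t \in exceptional W -> (W == U) || (W == P).
Proof.
move=> UC PC PU dUP tUP WC; rewrite inE => /hasP[W' W'C /and3P[W'W dWW']].
case: t tUP => -[|x s] //= szt /and5P[fs sU _ _ _] /and5P[_ sW _ _ _].
apply/negPn/negP; rewrite negb_or => /andP[WU WP].
have W'U : W' != U.
  apply: contraNneq WP => eW'U; apply/eqP; rewrite eW'U capvC in dWW'.
  exact: (partner_unique UC WC PC WU PU (ltnW dWW') (ltnW dUP)).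
have uWW'U : uniq [:: W; W'; U] by rewrite /= !inE negb_or eq_sym W'W WU W'U.
have dUWW' : h.-1 <= \dim (U :&: (W + W')).
  move/eqP: szt => /= <-; rewrite -(eqP fs).
  by rewrite dimvS // subv_cap sU (subv_trans sW (addvSl _ _)).
have := dim_cap_triple_lt WC W'C UC uWW'U dWW' dUWW'.
by rewrite addSnnS prednK // addnn -mul2n ltnn.
Qed.

Lemma sum_weight_exceptional U0 t : U0 \in C -> t \in exceptional U0 ->
  \sum_(U <- C) weight U t <= 2.
Proof.
move=> U0C tU0; have := tU0; rewrite inE => /hasP[P PC /and3P[PU0 dU0P tU0P]].
apply: (@leq_trans (\sum_(U <- C) ((U == U0) + (U == P)))).
  rewrite big_seq [X in _ <= X]big_seq; apply: leq_sum => U UC; rewrite /weight.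
  rewrite (negbTE (exceptional_notin_tuples U0C UC tU0)) add0n.
  case: (boolP (t \in exceptional U)) => // tU.
  have := exceptional_owner U0C PC PU0 dU0P tU0P UC tU.
  by case: (U == U0); case: (U == P).
by rewrite big_split /= !sum_nat_bool_count !count_uniq_mem // U0C PC.
Qed.

Lemma sum_weight_le t : \sum_(U <- C) weight U t <= 2 * free t.
Proof.
case ft: (free t); last first.
  rewrite big1 // => U _; rewrite /weight.
  have /negbTE-> : t \notin tuples U by apply/free_tuplesP => -[]; rewrite ft.
  have /negbTE-> // : t \notin exceptional U.
  by apply: contraFN ft; apply: exceptional_free.
case: (boolP (has (fun U => t \in exceptional U) C)) => [/hasP[U0 U0C]|noE].
  exact: sum_weight_exceptional.
have weightE U : U \in C -> weight U t = (t \in tuples U) * (2 - shared U t).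
  by move=> UC; rewrite /weight (negbTE (hasPn noE U UC)) addn0.
rewrite big_seq (eq_bigr _ weightE) -big_seq.
have := count_tuples_le2 t; set c := count _ C; rewrite leq_eqVlt ltnS => /orP[/eqP c2|c1].
  rewrite muln1 -[X in _ <= X]c2 /c -sum_nat_bool_count big_seq [X in _ <= X]big_seq.
  apply: leq_sum => U UC; case tU: (t \in tuples U) => //; rewrite mul1n.
  have : has (predC1 U) (filter (fun W => t \in tuples W) C).
    by apply: uniq_has_neq; rewrite ?filter_uniq // size_filter -/c c2.
  case/hasP => W; rewrite mem_filter /= => /andP[tW WC] WU.
  suff -> : shared U t by [].
  by apply/hasP; exists W; rewrite ?WU.
apply: (@leq_trans (\sum_(U <- C) 2 * (t \in tuples U))).
  by apply: leq_sum => U _; rewrite mulnC leq_mul2r leq_subr orbT.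
by rewrite -big_distrr /= sum_nat_bool_count -/c; lia.
Qed.

Lemma shared_lonely U t : (forall W, W \in C -> W != U -> \dim (U :&: W) < h) ->
  t \in tuples U -> ~~ shared U t.
Proof.
move=> lonely tU; apply/hasP => -[W WC /andP[WU tW]].
by have := lonely W WC WU; rewrite ltnNge (tuples_dim_cap tU tW).
Qed.

Lemma shared_partner U W t : U \in C -> W \in C -> W != U -> h <= \dim (U :&: W) ->
  t \in tuples U -> shared U t = (t \in tuples W).
Proof.
move=> UC WC WU dUW tU; apply/hasP/idP => [[W' W'C /andP[W'U tW']] | tW].
  by rewrite (partner_unique UC WC W'C WU W'U dUW (tuples_dim_cap tU tW')).
by exists W; rewrite ?WU.
Qed.

Lemma card_tuples_cap_le_exceptional U W : U \in C -> W \in C -> W != U ->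
  h < \dim (U :&: W) -> #|tuples (U :&: W)| <= #|exceptional U|.
Proof.
move=> UC WC WU dUW.
have notsub A B : A \in C -> B \in C -> B != A -> ~~ (A <= B)%VS.
  by move=> A_C B_C; apply: contra => sAB; rewrite eq_sym eqEdim sAB (C_dim A_C) (C_dim B_C) /=.
have UW : U != W by rewrite eq_sym.
have [w [wUW wU wW]] := sum_notin_union (notsub U W UC WC WU) (notsub W U WC UC UW).
pose shift (t : h.-tuple V) : h.-tuple V := insubd t ((head 0%R t + w)%R :: behead t).
have tE (t : h.-tuple V) : tval t = head 0%R t :: behead t.
  by case: t => -[|y s] //= /eqP szt; move: h_gt0; rewrite -szt.
have shiftE t : val (shift t) = (head 0%R t + w)%R :: behead t.
  by rewrite val_insubd /= size_behead size_tuple prednK ?eqxx.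
have shift_inj : injective shift.
  move=> t1 t2 e; apply: val_inj; rewrite /= (tE t1) (tE t2).
  by move: (congr1 val e); rewrite !shiftE => -[/addIr -> ->].
rewrite -(card_imset _ shift_inj); apply/subset_leq_card/subsetP.
move=> _ /imsetP[t /free_tuplesP[ft tUW _] ->]; rewrite inE; apply/hasP; exists W => //.
rewrite WU dUW /= shiftE /=.
have /andP[hU hW] : (head 0%R t \in U) && (head 0%R t \in W).
  by rewrite -memv_cap (subvP tUW) // memv_span // tE mem_head.
have sUW : (<<behead t>> <= U :&: W)%VS.
  by apply: subv_trans tUW; apply/span_subvP => y yb; rewrite memv_span // tE inE yb orbT.
move: ft; rewrite tE free_cons => /andP[_ ->].
rewrite (subv_trans sUW (capvSl _ _)) (memvD (subvP (addvSl U W) _ hU) wUW) /=.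
have wE : w = ((head 0%R t + w) - head 0%R t)%R by rewrite addrC addKr.
by apply/andP; split; [apply: contra wU | apply: contra wW] => hw;
  rewrite wE memvB ?hU ?hW ?hw.
Qed.

Lemma sum_weight_ge U : U \in C ->
  2 * #|tuples U| <= \sum_t weight U t + \prod_(i < h) (#|F| ^ h - #|F| ^ i).
Proof.
move=> UC; rewrite /weight big_split /= sum_nat_bool_card.
have twice : 2 * #|tuples U| = \sum_t 2 * (t \in tuples U).
  by rewrite -big_distrr /= sum_nat_bool_card.
have [/hasP[W WC /andP[WU dUW]] | lonely] :=
  boolP (has (fun W => (W != U) && (h <= \dim (U :&: W))) C); last first.
  rewrite twice -addnA; apply: leq_trans (leq_addr _ _); apply: leq_sum => t _.
  case tU: (t \in tuples U) => //; rewrite (negbTE (shared_lonely _ tU)) //.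
  by move=> W WC WU; rewrite ltnNge; apply: contraNN (hasPn lonely W WC) => ->; rewrite WU.
have splitU : \sum_t (t \in tuples U) * (2 - shared U t) + #|tuples (U :&: W)| =
    2 * #|tuples U|.
  rewrite free_tuplesI -sum_nat_bool_card twice -big_split /=; apply: eq_bigr => t _.
  rewrite in_setI; case tU: (t \in tuples U) => //=.
  by rewrite (shared_partner UC WC WU dUW tU) mul1n; case: (t \in tuples W).
rewrite -splitU -addnA leq_add2l.
have [dUW_gt|dUW_le] := ltnP h (\dim (U :&: W)).
  exact: leq_trans (card_tuples_cap_le_exceptional UC WC WU dUW_gt) (leq_addr _ _).
rewrite card_free_tuples (_ : \dim _ = h) ?leq_addl //.
by apply/eqP; rewrite eqn_leq dUW_le dUW.
Qed.

Lemma size_covering_code_le :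
  size C * (2 * \prod_(i < h) (#|F| ^ k - #|F| ^ i) - \prod_(i < h) (#|F| ^ h - #|F| ^ i))
    <= 2 * \prod_(i < h) (#|F| ^ n - #|F| ^ i).
Proof.
apply: (@leq_trans (\sum_(U <- C) \sum_t weight U t)).
  rewrite mulnC -iter_addn_0 -count_predT -big_const_seq /=.
  rewrite big_seq [X in _ <= X]big_seq; apply: leq_sum => U UC.
  by rewrite leq_subLR addnC -(C_dim UC) -card_free_tuples sum_weight_ge.
rewrite exchange_big /= (@leq_trans (\sum_(t : h.-tuple V) 2 * free t)) ?leq_sum // => [t _|].
  exact: sum_weight_le.
have -> : \prod_(i < h) (#|F| ^ n - #|F| ^ i) = #|free_tuples h (fullv : {vspace V})|.
  by rewrite card_free_tuples dimvf /dim /= mul1n.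
rewrite -big_distrr leq_mul2l free_tuples_fullv -sum_nat_bool_card /=.
by apply/leq_sum => t _; rewrite inE.
Qed.

End CoveringCode.

Local Open Scope ring_scope.

Lemma gauss_binomE (q m h : nat) : (0 < q)%N -> (h <= m)%N ->
  gauss_binom q m h =
    (\prod_(i < h) (q ^ m - q ^ i))%N%:R / (\prod_(i < h) (q ^ h - q ^ i))%N%:R.
Proof.
move=> q_gt0 hm; rewrite /gauss_binom prodf_div !natr_prod.
by congr (_ / _); apply: eq_bigr => i _; rewrite natrB // leq_pexp2l // ltnW //;
  apply: leq_trans hm.
Qed.

Lemma ratio_bound_of_nat (c a b N : nat) : (0 < b)%N -> (b <= a)%N ->
  (c * (2 * a - b) <= 2 * N)%N ->
  (c%:R : rat) <= (1 + 1 / (2 * (a%:R / b%:R) - 1)) * ((N%:R / b%:R) / (a%:R / b%:R)).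
Proof.
move=> b_gt0 ba cN.
have a_gt0 : (0 < a)%N by apply: leq_trans ba.
have d_gt0 : (0 < 2 * a - b)%N by rewrite subn_gt0; lia.
have dE : ((2 * a - b)%N%:R : rat) = 2 * a%:R - b%:R by rewrite natrB ?natrM //; lia.
have d_neq0 : (2 * a%:R - b%:R : rat) != 0 by rewrite -dE pnatr_eq0 -lt0n.
have -> : (1 + 1 / (2 * (a%:R / b%:R) - 1)) * ((N%:R / b%:R) / (a%:R / b%:R))
    = (2 * N)%N%:R / (2 * a - b)%N%:R :> rat.
  rewrite dE natrM; field.
  by rewrite d_neq0 !pnatr_eq0 -!lt0n a_gt0 b_gt0.
by rewrite ler_pdivlMr ?ltr0n // -natrM ler_nat.
Qed.

Theorem mainTheorem3 (F : finFieldType) (n k delta : nat)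
    (C : seq {vspace 'rV[F]_n}) :
  (0 < n)%N -> (0 < k)%N -> (0 < delta)%N -> (k <= n)%N -> (delta <= 2 * k)%N ->
  covering_code k delta 3 C ->
  let q := #|F| in
  let h := ((k + 1) - (delta.+1)./2)%N in
  (size C)%:R <=
    (1 + 1 / (2 * gauss_binom q k h - 1)) * (gauss_binom q n h / gauss_binom q k h) :> rat.
Proof.
move=> _ _ delta_gt0 kn delta_le covC; cbv zeta.
set q := #|F|; set h := (k + 1 - delta.+1./2)%N.
have q_gt0 : (0 < q)%N by rewrite ltnW // finNzRing_gt1.
have h_le_k : (h <= k)%N by rewrite /h -divn2; lia.
have h_gt0 : (0 < h)%N by rewrite /h -divn2; lia.
have h_large : (2 * k < 2 * h + delta)%N by rewrite /h -divn2; lia.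
rewrite (gauss_binomE q_gt0 h_le_k) (gauss_binomE q_gt0 (leq_trans h_le_k kn)).
apply: ratio_bound_of_nat (size_covering_code_le covC h_gt0 h_large).
  by rewrite prodn_gt0 // => i; rewrite subn_gt0 ltn_exp2l ?finNzRing_gt1.
by apply: leq_prod => i _; rewrite leq_sub2r // leq_pexp2l.
Qed.
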